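(* Let $R$ be an associative (unital) ring and let $\sigma\colon R\to R$ be an additive bijection with $\sigma(1)=1$. If $R$ is right Noetherian, then the non-associative skew Laurent series ring $R((X;\sigma))$ is right Noetherian.
   Context: A right ideal of a non-associative ring $S$ is an additive subgroup $I$ with $Is\subseteq I$ for all $s\in S$; $S$ is right Noetherian if it satisfies the ascending chain condition on right ideals. $R((X;\sigma))$ is the set of formal series $\sum_{i\in\mathbb{Z}} r_iX^i$ with $r_i\in R$ and $r_i=0$ for all sufficiently negative $i$, with pointwise addition and multiplication $\left(\sum_m a_mX^m\right)\left(\sum_n b_nX^n\right)=\sum_{k}\left(\sum_{m+n=k}a_m\sigma^m(b_n)\right)X^k$ (finite inner sums), i.e. the extension of $(rX^m)(sX^n)=(r\sigma^m(s))X^{m+n}$ for $r,s\in R$, $m,n\in\mathbb{Z}$, where $\sigma^m$ for $m<0$ is a power of $\sigma^{-1}$; it is a unital, not necessarily associative ring. *)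

From Stdlib Require Import ClassicalEpsilon.
From mathcomp Require Import all_boot all_order all_algebra.
Set Implicit Arguments. Unset Strict Implicit. Unset Printing Implicit Defensive.
Import Order.TTheory GRing.Theory Num.Theory.
Local Open Scope ring_scope.

(* Generic notions for a (not necessarily associative) ring whose elements
   are the elements of T satisfying the carrier predicate S, with the given
   zero, addition, negation and multiplication. *)
Definition right_ideal (T : Type) (S : T -> Prop) (zero : T) (add : T -> T -> T)
  (opp : T -> T) (mul : T -> T -> T) (I : T -> Prop) : Prop :=
  [/\ (forall x, I x -> S x),
      I zero,
      (forall x y, I x -> I y -> I (add x y)),
      (forall x, I x -> I (opp x)) &
      (forall x s, I x -> S s -> I (mul x s))].

Definition right_noetherian (T : Type) (S : T -> Prop) (zero : T)
  (add : T -> T -> T) (opp : T -> T) (mul : T -> T -> T) : Prop :=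
  forall I : nat -> T -> Prop,
    (forall n, right_ideal S zero add opp mul (I n)) ->
    (forall n x, I n x -> I n.+1 x) ->
    exists N : nat, forall n, (N <= n)%N -> forall x, I n x <-> I N x.

Section Laurent.
Variable R : pzRingType.

Definition ring_right_noetherian : Prop :=
  right_noetherian (fun _ : R => True) 0 +%R -%R *%R.

Definition sinv (sigma : R -> R) (y : R) : R :=
  epsilon (inhabits 0) (fun x => sigma x = y).

Definition spow (sigma : R -> R) (m : int) (x : R) : R :=
  match m with
  | Posz n => iter n sigma x
  | Negz n => iter n.+1 (sinv sigma) x
  end.

Definition series := int -> R.

Definition is_laurent (f : series) : Prop :=
  exists N : int, forall i, i < N -> f i = 0.

Definition lb (f : series) : int :=
  epsilon (inhabits 0) (fun N : int => forall i, i < N -> f i = 0).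

Definition szero : series := fun _ => 0.
Definition sadd (f g : series) : series := fun i => f i + g i.
Definition sopp (f : series) : series := fun i => - f i.

(* (f g)_k = sum_{m + n = k} f_m sigma^m (g_n), the sum being over
   lb f <= m <= k - lb g (all other terms vanish for Laurent series). *)
Definition smul (sigma : R -> R) (f g : series) : series := fun k =>
  \sum_(j < absz (Num.max 0 (k - lb f - lb g + 1)))
     f (lb f + j%:Z) * spow sigma (lb f + j%:Z) (g (k - (lb f + j%:Z))).

Definition laurent_right_noetherian (sigma : R -> R) : Prop :=
  right_noetherian is_laurent szero sadd sopp (smul sigma).

End Laurent.

From Stdlib Require Import ClassicalEpsilon Classical FunctionalExtensionality.
From mathcomp Require Import all_boot all_order all_algebra zify.
Set Implicit Arguments. Unset Strict Implicit. Unset Printing Implicit Defensive.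
Import Order.TTheory GRing.Theory Num.Theory.
Local Open Scope ring_scope.

(* The leading coefficients (in degree 0, after shifting) of the elements of a
   right ideal J of R((X;sigma)) form a right ideal of R.  An ascending chain
   I_0 <= I_1 <= ... yields an ascending chain of such ideals, which
   stabilises at some N, where it is generated by the leading coefficients
   a_i of finitely many f_i in I_N.  For m >= N, any g in I_m vanishing below
   degree d is then written as g = sum_i f_i h_i, the coefficients of the h_i
   being determined degree by degree: if the residual g - sum_i f_i h_i
   vanishes below degree k, its coefficient in degree k is a leading
   coefficient of I_m, hence equals sum_i a_i c_i, and setting the degree-k
   coefficient of h_i to c_i kills it without changing lower degrees. *)

Local Arguments spow : simpl never.

Lemma add_morph0 (V W : zmodType) (f : V -> W) :
  {morph f : x y / x + y} -> f 0 = 0.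
Proof. by move=> fD; apply: (@addrI _ (f 0)); rewrite -fD !addr0. Qed.

Lemma chain_le (T : Type) (P : nat -> T -> Prop) :
  (forall n x, P n x -> P n.+1 x) ->
  forall m n, (m <= n)%N -> forall x, P m x -> P n x.
Proof.
move=> Pinc m n /subnK <- x; elim: (n - m)%N => [|k IH] Pmx //.
by rewrite addSn; apply/Pinc/IH.
Qed.

Section RightIdeal.
Variables (T : Type) (S : T -> Prop) (zero : T) (add : T -> T -> T).
Variables (opp : T -> T) (mul : T -> T -> T) (I : T -> Prop).
Hypothesis I_ideal : right_ideal S zero add opp mul I.

Lemma right_ideal_sub x : I x -> S x.
Proof. by case: I_ideal => H _ _ _ _; apply: H. Qed.

Lemma right_ideal0 : I zero.
Proof. by case: I_ideal. Qed.

Lemma right_idealD x y : I x -> I y -> I (add x y).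
Proof. by case: I_ideal => _ _ H _ _; apply: H. Qed.

Lemma right_idealN x : I x -> I (opp x).
Proof. by case: I_ideal => _ _ _ H _; apply: H. Qed.

Lemma right_idealM x r : I x -> S r -> I (mul x r).
Proof. by case: I_ideal => _ _ _ _ H; apply: H. Qed.

End RightIdeal.

Section WindowSum.
Variable V : nmodType.

Lemma window_sum_widen (T : int -> V) (A L : int) (N M : nat) :
  (forall m, m < A \/ A + N%:Z <= m -> T m = 0) ->
  L <= A -> A + N%:Z <= L + M%:Z ->
  \sum_(j < N) T (A + j%:Z) = \sum_(j < M) T (L + j%:Z).
Proof.
move=> Tout LA AM; have [p Ep] : exists p : nat, p%:Z = A - L.
  by exists (absz (A - L)); lia.
have -> : M = (p + (N + (M - (p + N))))%N by lia.
rewrite big_split_ord /= [X in _ = X + _]big1 ?add0r; last first.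
  by move=> j _; apply: Tout; have := ltn_ord j; lia.
rewrite big_split_ord /= [X in _ = _ + X]big1 ?addr0; last first.
  by move=> j _; apply: Tout; lia.
by apply: eq_bigr => j _; congr T; lia.
Qed.

Lemma window_sum_eq (T : int -> V) (A1 A2 : int) (N1 N2 : nat) :
  (forall m, m < A1 \/ A1 + N1%:Z <= m -> T m = 0) ->
  (forall m, m < A2 \/ A2 + N2%:Z <= m -> T m = 0) ->
  \sum_(j < N1) T (A1 + j%:Z) = \sum_(j < N2) T (A2 + j%:Z).
Proof.
move=> T1 T2; pose L := Num.min A1 A2.
pose M := absz (Num.max (A1 + N1%:Z) (A2 + N2%:Z) - L)%R.
by rewrite (@window_sum_widen T A1 L N1 M) 1?(@window_sum_widen T A2 L N2 M) //;
  rewrite /L /M; lia.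
Qed.

End WindowSum.

Section SkewPowers.
Variables (R : pzRingType) (sigma : R -> R).
Hypothesis sigma_bij : bijective sigma.

Lemma sinvK : cancel (sinv sigma) sigma.
Proof.
move=> y; apply: (epsilon_spec (inhabits 0) (fun x => sigma x = y)).
by case: sigma_bij => g _ gK; exists (g y).
Qed.

Lemma spow_fixed m x : sigma x = x -> spow sigma m x = x.
Proof.
have iter_fixed (f : R -> R) k : f x = x -> iter k f x = x.
  by move=> fx; elim: k => //= k ->.
move=> sx; case: m => k; apply: iter_fixed => //.
by apply: (bij_inj sigma_bij); rewrite sinvK.
Qed.

End SkewPowers.

Section Series.
Variable R : pzRingType.

Definition vanish_below (f : series R) (A : int) := forall i, i < A -> f i = 0.

Definition monomial (c : R) (n : int) : series R :=
  fun j => if j == n then c else 0.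

Lemma lb_vanish (f : series R) A : vanish_below f A -> vanish_below f (lb f).
Proof.
move=> fA; apply: (epsilon_spec (inhabits 0) (vanish_below f)).
by exists A.
Qed.

Lemma monomial_vanish c n : vanish_below (monomial c n) n.
Proof. by move=> i ni; rewrite /monomial ifN //; apply/eqP; lia. Qed.

Lemma monomial_laurent c n : is_laurent (monomial c n).
Proof. by exists n; apply: monomial_vanish. Qed.

Lemma vanish_laurent f A : vanish_below f A -> is_laurent f.
Proof. by exists A. Qed.

Fixpoint ssum (n : nat) (F : nat -> series R) : series R :=
  if n is n'.+1 then sadd (ssum n' F) (F n') else szero R.

Lemma ssumE n F k : ssum n F k = \sum_(i < n) F i k.
Proof. by elim: n => [|n IH] /=; rewrite ?big_ord0 // big_ord_recr -IH. Qed.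

End Series.

Section FinitelyGenerated.
Variable R : pzRingType.
Hypothesis R_noetherian : ring_right_noetherian R.

Local Notation ring_ideal := (right_ideal (fun _ : R => True) 0 +%R -%R *%R).

Definition rspan (s : seq R) (x : R) :=
  exists c : nat -> R, x = \sum_(i < size s) s`_i * c i.

Lemma rspan_right_ideal s : ring_ideal (rspan s).
Proof.
split => //.
- by exists (fun _ => 0); rewrite big1 // => i _; rewrite mulr0.
- move=> _ _ [c ->] [c' ->]; exists (fun i => c i + c' i).
  by rewrite -big_split; apply: eq_bigr => i _; rewrite mulrDr.
- move=> _ [c ->]; exists (fun i => - c i).
  by rewrite -sumrN; apply: eq_bigr => i _; rewrite mulrN.
- move=> _ r [c ->] _; exists (fun i => c i * r).
  by rewrite mulr_suml; apply: eq_bigr => i _; rewrite mulrA.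
Qed.

Lemma rspan_rcons s y x : rspan s x -> rspan (rcons s y) x.
Proof.
move=> [c ->]; exists (fun i => if (i < size s)%N then c i else 0).
rewrite size_rcons big_ord_recr /= ltnn mulr0 addr0.
by apply: eq_bigr => i _; rewrite nth_rcons ltn_ord.
Qed.

Lemma rspan_rcons_last s y : rspan (rcons s y) y.
Proof.
exists (fun i => (i == size s)%:R).
rewrite size_rcons big_ord_recr /= nth_rcons ltnn eqxx mulr1 big1 ?add0r //.
by move=> i _; rewrite nth_rcons ltn_ord ltn_eqF ?mulr0.
Qed.

Fixpoint iter_rcons (next : seq R -> R) (k : nat) : seq R :=
  if k is k'.+1 then rcons (iter_rcons next k') (next (iter_rcons next k'))
  else [::].

(* Otherwise adjoining, again and again, an element of L outside the current
   span would produce a strictly ascending chain of right ideals. *)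
Lemma noetherian_finitely_generated L : ring_ideal L ->
  exists s : seq R, (forall i, (i < size s)%N -> L s`_i) /\
                    (forall x, L x -> rspan s x).
Proof.
move=> L_ideal; apply: NNPP => not_fg.
have escape s : (forall i, (i < size s)%N -> L s`_i) ->
    exists x, L x /\ ~ rspan s x.
  move=> sL; apply: NNPP => no_escape; apply: not_fg; exists s; split => // x Lx.
  by apply: NNPP => x_out; apply: no_escape; exists x.
pose next s := epsilon (inhabits 0) (fun x => L x /\ ~ rspan s x).
have chainL k i : (i < size (iter_rcons next k))%N -> L (iter_rcons next k)`_i.
  elim: k i => [|k IH] i //=; rewrite size_rcons ltnS nth_rcons => ik.
  case: ltnP => [|ki]; first exact: IH.
  have -> : i = size (iter_rcons next k) by apply/eqP; rewrite eqn_leq ik ki.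
  by rewrite eqxx; case: (epsilon_spec (inhabits 0) _ (escape _ IH)).
have [N stable] := R_noetherian (fun k => rspan_right_ideal (iter_rcons next k))
  (fun k x => @rspan_rcons _ _ x).
have [_] := epsilon_spec (inhabits 0) _ (escape _ (chainL N)); apply.
by apply/(stable N.+1 (leqnSn N)); apply: rspan_rcons_last.
Qed.

End FinitelyGenerated.

Section SkewProduct.
Variables (R : pzRingType) (sigma : R -> R).
Hypotheses (sigma_bij : bijective sigma) (sigma0 : sigma 0 = 0).
Hypothesis sigma1 : sigma 1 = 1.

Local Notation laurent_ideal :=
  (right_ideal (@is_laurent R) (szero R) (@sadd R) (@sopp R) (smul sigma)).
Local Notation ring_ideal := (right_ideal (fun _ : R => True) 0 +%R -%R *%R).

Lemma smulE (f h : series R) (A B k : int) (N : nat) :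
  vanish_below f A -> vanish_below h B -> k - B < A + N%:Z ->
  smul sigma f h k =
  \sum_(j < N) f (A + j%:Z) * spow sigma (A + j%:Z) (h (k - (A + j%:Z))).
Proof.
move=> fA hB kN; have fl := lb_vanish fA; have hl := lb_vanish hB.
have spow0 m : spow sigma m 0 = 0 by apply: spow_fixed.
apply: (@window_sum_eq _ (fun m => f m * spow sigma m (h (k - m))))
  => m [mlo|mhi].
- by rewrite fl ?mul0r.
- by rewrite hl ?spow0 ?mulr0 //; lia.
- by rewrite fA ?mul0r.
- by rewrite hB ?spow0 ?mulr0 //; lia.
Qed.

Lemma smul_vanish f h A B :
  vanish_below f A -> vanish_below h B -> vanish_below (smul sigma f h) (A + B).
Proof. by move=> fA hB k kAB; rewrite (@smulE f h A B k 0) ?big_ord0 //; lia. Qed.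

Lemma smul_monomial_lead f A c n : vanish_below f A ->
  smul sigma f (monomial c n) (A + n) = f A * spow sigma A c.
Proof.
move=> fA; rewrite (@smulE _ _ _ _ _ 1 fA (@monomial_vanish _ c n)); last lia.
by rewrite big_ord1 addr0 /monomial ifT //; apply/eqP; lia.
Qed.

Lemma smulE0 f h d k : vanish_below f 0 -> vanish_below h d ->
  smul sigma f h k =
  \sum_(i < (absz (k - d)).+1) f i%:Z * spow sigma i%:Z (h (k - i%:Z)).
Proof.
by move=> f0 hd; rewrite (@smulE f h 0 d k (absz (k - d)).+1) //; lia.
Qed.

Lemma smul_eq_upto f h h' d j :
  vanish_below f 0 -> vanish_below h d -> vanish_below h' d ->
  (forall m, m <= j -> h m = h' m) -> smul sigma f h j = smul sigma f h' j.
Proof.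
move=> f0 hd h'd hh'; rewrite (smulE0 _ f0 hd) (smulE0 _ f0 h'd).
by apply: eq_bigr => i _; rewrite hh' //; lia.
Qed.

Lemma smul_update f h h' d k c :
  vanish_below f 0 -> vanish_below h d -> vanish_below h' d -> d <= k ->
  h k = 0 -> h' k = c -> (forall m, m != k -> h' m = h m) ->
  smul sigma f h' k = f 0 * c + smul sigma f h k.
Proof.
move=> f0 hd h'd dk hk h'k hh'; rewrite (smulE0 _ f0 hd) (smulE0 _ f0 h'd).
rewrite !big_ord_recl !subr0 hk h'k /= mulr0 add0r.
congr (_ + _); apply: eq_bigr => i _; rewrite hh' //; apply/eqP; rewrite /bump; lia.
Qed.

Lemma ideal_ssum J n F : laurent_ideal J ->
  (forall i, (i < n)%N -> J (F i)) -> J (ssum n F).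
Proof.
move=> J_ideal; elim: n => [|n IH] JF /=; first exact: right_ideal0 J_ideal.
by apply: (right_idealD J_ideal); [apply: IH => i ?|]; apply: JF; lia.
Qed.

Definition lead_ideal (J : series R -> Prop) (x : R) :=
  exists f, [/\ J f, vanish_below f 0 & f 0 = x].

Lemma lead_ideal_sub (J J' : series R -> Prop) :
  (forall f, J f -> J' f) -> forall x, lead_ideal J x -> lead_ideal J' x.
Proof. by move=> JJ' x [f [Jf f0 fx]]; exists f; split; first exact: JJ'. Qed.

(* Multiplying by X^-k moves the coefficient in degree [k] to degree 0. *)
Lemma lead_ideal_coef J f k : laurent_ideal J -> J f -> vanish_below f k ->
  lead_ideal J (f k).
Proof.
move=> J_ideal Jf fk; exists (smul sigma f (monomial 1 (- k))); split.
- by apply: (right_idealM J_ideal) => //; apply: monomial_laurent.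
- by have := smul_vanish fk (@monomial_vanish _ 1 (- k)); rewrite subrr.
- by rewrite -{1}(subrr k) smul_monomial_lead // spow_fixed ?mulr1.
Qed.

Lemma lead_ideal_right_ideal J : laurent_ideal J -> ring_ideal (lead_ideal J).
Proof.
move=> J_ideal; split => //.
- by exists (szero R); split=> //; apply: right_ideal0 J_ideal.
- move=> x y [f [Jf f0 <-]] [h [Jh h0 <-]]; exists (sadd f h); split => //.
    exact: (right_idealD J_ideal).
  by move=> i i0; rewrite /sadd f0 ?h0 ?addr0.
- move=> x [f [Jf f0 <-]]; exists (sopp f); split => //.
    exact: (right_idealN J_ideal).
  by move=> i i0; rewrite /sopp f0 ?oppr0.
- move=> x r [f [Jf f0 <-]] _; exists (smul sigma f (monomial r 0)); split.
  + by apply: (right_idealM J_ideal) => //; apply: monomial_laurent.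
  + by have := smul_vanish f0 (@monomial_vanish _ r 0); rewrite addr0.
  + by rewrite -[X in smul _ _ _ X](addr0 0) smul_monomial_lead.
Qed.

Section LeadIdealClosure.
Variables (I J : series R -> Prop) (s : seq R).
Hypotheses (I_ideal : laurent_ideal I) (J_ideal : laurent_ideal J).
Hypothesis IJ : forall f, I f -> J f.
Hypothesis s_lead : forall i, (i < size s)%N -> lead_ideal I s`_i.
Hypothesis s_span : forall x, lead_ideal J x -> rspan s x.
Variables (g : series R) (d : int).
Hypotheses (Jg : J g) (gd : vanish_below g d).

Definition gen i : series R := epsilon (inhabits (szero R))
  (fun f => [/\ I f, vanish_below f 0 & f 0 = s`_i]).

Lemma genP i : (i < size s)%N ->
  [/\ I (gen i), vanish_below (gen i) 0 & gen i 0 = s`_i].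
Proof. by move/s_lead; apply: epsilon_spec. Qed.

Definition combination (h : nat -> series R) : series R :=
  ssum (size s) (fun i => smul sigma (gen i) (h i)).

Definition residual (h : nat -> series R) : series R :=
  sadd g (sopp (combination h)).

Definition coords (x : R) : nat -> R := epsilon (inhabits (fun=> 0))
  (fun c : nat -> R => x = \sum_(i < size s) s`_i * c i).

Lemma coordsP x : rspan s x -> x = \sum_(i < size s) s`_i * coords x i.
Proof. exact: epsilon_spec. Qed.

(* [approx t] determines the coefficients in degrees [d, d + t) of the
   series h_i with g = sum_i gen_i h_i. *)
Fixpoint approx (t : nat) : nat -> series R :=
  if t is t'.+1 then fun i j =>
    if j == d + t'%:Z then coords (residual (approx t') (d + t'%:Z)) i
    else approx t' i j
  else fun _ _ => 0.

Lemma approx_vanish t i j : j < d \/ d + t%:Z <= j -> approx t i j = 0.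
Proof.
elim: t j => [//|t IH] j jout /=.
by rewrite ifN ?IH //; [lia | apply/eqP; lia].
Qed.

Lemma approx_stable t t' i j : (t <= t')%N -> j < d + t%:Z ->
  approx t' i j = approx t i j.
Proof.
move=> /subnK <-; elim: (t' - t)%N => [//|k IH] jt.
by rewrite addSn /= ifN ?IH //; apply/eqP; lia.
Qed.

Lemma combination_eq_upto h h' j :
  (forall i, vanish_below (h i) d) -> (forall i, vanish_below (h' i) d) ->
  (forall i m, m <= j -> h i m = h' i m) ->
  combination h j = combination h' j.
Proof.
move=> hd h'd hh'; rewrite /combination !ssumE; apply: eq_bigr => i _.
case: (genP (ltn_ord i)) => _ gen0 _.
by apply: (smul_eq_upto gen0 (hd i) (h'd i)) => m mj; apply: hh'.
Qed.

Lemma residual_in_ideal h : (forall i, is_laurent (h i)) -> J (residual h).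
Proof.
move=> hL; apply: (right_idealD J_ideal Jg); apply: (right_idealN J_ideal).
apply: (ideal_ssum J_ideal) => i lt_i_s; apply: (right_idealM J_ideal) => //.
by case: (genP lt_i_s) => /IJ.
Qed.

Lemma approx_laurent t i : is_laurent (approx t i).
Proof. by exists d => j jd; apply: approx_vanish; left. Qed.

Lemma residual_approx t j : j < d + t%:Z -> residual (approx t) j = 0.
Proof.
have approx_d t' i : vanish_below (approx t' i) d.
  by move=> m md; apply: approx_vanish; left.
elim: t j => [|t IH] j jt.
  rewrite /residual /sadd /sopp gd; last by lia.
  rewrite /combination ssumE big1 ?oppr0 ?addr0 // => i _.
  case: (genP (ltn_ord i)) => _ gen0 _.
  by apply: (smul_vanish gen0 (approx_d 0%N i)); lia.
have [jt'|jt'] := ltP j (d + t%:Z).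
  rewrite -(IH j jt') /residual /sadd /sopp (@combination_eq_upto _ (approx t)) //.
  by move=> i m mj; apply: approx_stable; lia.
have {jt jt'} -> : j = d + t%:Z by lia.
set k := d + t%:Z; set r := residual (approx t) k.
have r_span : r = \sum_(i < size s) s`_i * coords r i.
  apply/coordsP/s_span.
  apply: (lead_ideal_coef J_ideal (residual_in_ideal (approx_laurent t))).
  by move=> m mk; apply: IH.
have step (i : 'I_(size s)) : smul sigma (gen i) (approx t.+1 i) k =
    s`_i * coords r i + smul sigma (gen i) (approx t i) k.
  case: (genP (ltn_ord i)) => _ gen0 <-.
  apply: (smul_update gen0 (approx_d t i) (approx_d t.+1 i)); rewrite /k.
  - by lia.
  - by apply: approx_vanish; right.
  - by rewrite /= eqxx.
  - by move=> m /negPf /= ->.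
have r_def : r = g k - \sum_(i < size s) smul sigma (gen i) (approx t i) k.
  by rewrite /r /residual /sadd /sopp /combination ssumE.
rewrite /residual /sadd /sopp /combination ssumE (eq_bigr _ (fun i _ => step i)).
by rewrite big_split opprD addrCA -r_def -r_span addNr.
Qed.

Definition limit (i : nat) : series R :=
  fun j => if j < d then 0 else approx (absz (j - d)).+1 i j.

Lemma limit_vanish i : vanish_below (limit i) d.
Proof. by move=> j jd; rewrite /limit jd. Qed.

Lemma g_combination_limit : g = combination limit.
Proof.
apply: functional_extensionality => k.
have [kd|dk] := ltP k d.
  rewrite gd // /combination ssumE big1 // => i _.
  case: (genP (ltn_ord i)) => _ gen0 _.
  by apply: (smul_vanish gen0 (limit_vanish i)); lia.
pose t := (absz (k - d)).+1.
have /eqP := residual_approx (j := k) (t := t) ltac:(lia).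
rewrite /residual /sadd /sopp subr_eq0 => /eqP ->.
apply: combination_eq_upto => [i m md|i|i m mk].
- by apply: approx_vanish; left.
- exact: limit_vanish.
- rewrite /limit; case: ltP => md; first by apply: approx_vanish; left.
  by apply: approx_stable; lia.
Qed.

Lemma lead_ideal_closure : I g.
Proof.
rewrite g_combination_limit; apply: (ideal_ssum I_ideal) => i lt_i_s.
case: (genP lt_i_s) => Igen _ _; apply: (right_idealM I_ideal Igen).
exact: vanish_laurent (limit_vanish i).
Qed.

End LeadIdealClosure.

End SkewProduct.

Theorem theorem20 (R : pzRingType) (sigma : R -> R)
  (sigma_add : forall x y : R, sigma (x + y) = sigma x + sigma y)
  (sigma_bij : bijective sigma)
  (sigma1 : sigma 1 = 1) :
  ring_right_noetherian R -> laurent_right_noetherian sigma.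
Proof.
move=> R_noetherian I I_ideal I_inc.
have sigma0 : sigma 0 = 0 by apply: add_morph0.
have lead_ideal_ideal k := lead_ideal_right_ideal sigma_bij sigma0 (I_ideal k).
have [N lead_stable] :=
  R_noetherian _ lead_ideal_ideal (fun k => lead_ideal_sub (I_inc k)).
have [s [s_lead s_span]] :=
  noetherian_finitely_generated R_noetherian (lead_ideal_ideal N).
exists N => m le_Nm f; split => [Imf|]; last exact: (chain_le I_inc le_Nm).
have [d fd] := right_ideal_sub (I_ideal m) Imf.
apply: (lead_ideal_closure sigma_bij sigma0 sigma1 (I_ideal N) (I_ideal m)
  (chain_le I_inc le_Nm) s_lead _ Imf fd).
by move=> x /(lead_stable m le_Nm)/s_span.
Qed.
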